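(* Let $G$ be a signed digraph that has an initial cycle. Then no Boolean network on $G$ is synchronizing.
   Context: A signed digraph on $V$ is $(V,E)$ with $E\subseteq V\times V\times\{-1,1\}$. A strong component is a maximal strongly connected induced subgraph; it is initial if no arc enters it from outside. An initial cycle is an initial strong component which is (isomorphic to) a cycle (a cycle has no repeated vertices; a loop is a cycle). A Boolean network (BN) is $f:\{0,1\}^V\to\{0,1\}^V$; its signed interaction digraph has a positive (negative) arc from $j$ to $i$ iff for some $x$ with $x_j=0$, $f_i(x+e_j)-f_i(x)$ is positive (negative). A BN on $G$ is one whose signed interaction digraph is $G$. $f^i(x)$ is $x$ with $x_i$ replaced by $f_i(x)$; $f^{i_1\cdots i_\ell}=f^{i_\ell}\circ\cdots\circ f^{i_1}$; $f$ is synchronizing if $f^w$ is constant for some word $w$. *)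

From mathcomp Require Import all_boot.
Set Implicit Arguments. Unset Strict Implicit. Unset Printing Implicit Defensive.

(* Signs: true = +1, false = -1.  A signed digraph on V is its arc set
   E ⊆ V × V × {-1,1}; an arc (j, i, s) goes from j to i with sign s. *)
Definition sdigraph (V : finType) := {set V * V * bool}.

(* Configurations x ∈ {0,1}^V, with false = 0, true = 1. *)
Definition config (V : finType) := {ffun V -> bool}.

Definition BN (V : finType) := config V -> config V.

Definition upd (V : finType) (x : config V) (i : V) (b : bool) : config V :=
  [ffun k => if k == i then b else x k].

(* Signed interaction digraph of f: positive (resp. negative) arc j -> i iff
   for some x with x_j = 0, f_i(x + e_j) - f_i(x) is positive (resp. negative). *)
Definition interaction (V : finType) (f : BN V) : sdigraph V :=
  [set a : V * V * bool |
     [exists x : config V,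
        (x a.1.1 == false) &&
        (if a.2 then (f x a.1.2 == false) && (f (upd x a.1.1 true) a.1.2 == true)
                else (f x a.1.2 == true) && (f (upd x a.1.1 true) a.1.2 == false))]].

Definition BN_on (V : finType) (G : sdigraph V) (f : BN V) : Prop :=
  interaction f = G.

Definition arcrel (V : finType) (G : sdigraph V) : rel V :=
  fun j i => ((j, i, true) \in G) || ((j, i, false) \in G).

Definition strong_component (V : finType) (G : sdigraph V) (C : {set V}) : Prop :=
  exists u : V, C = [set v | connect (arcrel G) u v && connect (arcrel G) v u].

Definition initial (V : finType) (G : sdigraph V) (C : {set V}) : Prop :=
  forall (j i : V) (s : bool), (j, i, s) \in G -> i \in C -> j \in C.

(* The subgraph of G induced by C is (isomorphic to) a cycle: there is a
   cyclic ordering c of the vertices of C (without repetition; a single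
   vertex gives a loop) and a sign for each arc such that the arcs of G with
   both ends in C are exactly the arcs (v, next c v) with their sign. *)
Definition induced_is_cycle (V : finType) (G : sdigraph V) (C : {set V}) : Prop :=
  exists (c : seq V) (sg : V -> bool),
    [/\ c != [::], uniq c, C = [set v | v \in c] &
        forall (j i : V) (s : bool), j \in C -> i \in C ->
          ((j, i, s) \in G) = ((i == next c j) && (s == sg j))].

Definition initial_cycle (V : finType) (G : sdigraph V) (C : {set V}) : Prop :=
  [/\ strong_component G C, initial G C & induced_is_cycle G C].

Definition fupd (V : finType) (f : BN V) (i : V) (x : config V) : config V :=
  upd x i (f x i).

(* f^{i_1 ... i_l} = f^{i_l} o ... o f^{i_1} *)
Definition fword (V : finType) (f : BN V) (w : seq V) (x : config V) : config V :=
  foldl (fun y i => fupd f i y) x w.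

Definition synchronizing (V : finType) (f : BN V) : Prop :=
  exists w : seq V, forall x y : config V, fword f w x = fword f w y.

From mathcomp Require Import all_boot.
Set Implicit Arguments. Unset Strict Implicit. Unset Printing Implicit Defensive.

(* In an initial cycle every vertex i has a unique in-neighbour p(i) in G, which
   lies on the cycle; hence f_i depends on x_(p(i)) alone and, the arc being
   present, it is either the identity or the negation of x_(p(i)).  So if two
   configurations differ at every vertex of the cycle, they still do after any
   update f^k, and the all-0 and all-1 configurations are never merged by a word. *)

Section Interaction.

Variable V : finType.
Implicit Types (f : BN V) (x y : config V).

Lemma upd_upd x k a b : upd (upd x k a) k b = upd x k b.
Proof. by apply/ffunP=> v; rewrite !ffunE; case: (v == k). Qed.

Lemma upd_id x k : upd x k (x k) = x.
Proof. by apply/ffunP=> v; rewrite !ffunE; case: eqP => // ->. Qed.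

Lemma upd_f_no_arc f k i :
  (forall s, (k, i, s) \notin interaction f) ->
  forall x b, f (upd x k b) i = f x i.
Proof.
move=> no_arc.
have up_k (z : config V) : z k = false -> f (upd z k true) i = f z i.
  move=> zk; move: (no_arc true) (no_arc false).
  rewrite !inE /= => /existsPn /(_ z) + /existsPn /(_ z).
  by rewrite zk /=; case: (f z i); case: (f (upd z k true) i).
move=> x b; set z := upd x k false.
have zk : z k = false by rewrite /z ffunE eqxx.
have upd_z c : f (upd z k c) i = f z i.
  by case: c; [exact: up_k | rewrite -zk upd_id].
have -> : upd x k b = upd z k b by rewrite /z upd_upd.
by rewrite upd_z -[in RHS](upd_id x k) -(upd_upd x k false) upd_z.
Qed.

Lemma eq_f_only_arc f i p :
  (forall j s, (j, i, s) \in interaction f -> j = p) ->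
  forall x y, x p = y p -> f x i = f y i.
Proof.
move=> only_p x y; have [n] := ubnP #|[pred k | x k != y k]|.
elim: n x => // n IH x; rewrite ltnS => le_n xp.
have [k /= xky | x_y] := pickP [pred k | x k != y k]; last first.
  congr (f _ i); apply/ffunP=> v.
  by move: (x_y v) => /=; case: (x v); case: (y v).
have kp : k != p by apply: contraNneq xky => ->; rewrite xp.
rewrite -(upd_f_no_arc (k := k) _ x (y k)); last first.
  by move=> s; apply/negP => /only_p/eqP; rewrite (negbTE kp).
apply: IH; last by rewrite ffunE eq_sym (negbTE kp).
rewrite (cardD1 k) inE /= xky add1n in le_n.
apply: leq_ltn_trans _ le_n; apply: subset_leq_card; apply/subsetP=> v.
by rewrite !inE ffunE; case: (eqVneq v k) => [->|]; rewrite ?eqxx.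
Qed.

Lemma interaction_arc_flip f j i s :
  (j, i, s) \in interaction f ->
  exists2 z : config V, z j = false & f z i != f (upd z j true) i.
Proof.
rewrite inE /= => /existsP [z /andP [zj fz]]; exists z; first exact/eqP.
by move: fz; case: s; case: (f z i); case: (f (upd z j true) i).
Qed.

Lemma neq_f_only_arc f i p s :
  (forall j s, (j, i, s) \in interaction f -> j = p) ->
  (p, i, s) \in interaction f ->
  forall x y, x p != y p -> f x i != f y i.
Proof.
move=> only_p /interaction_arc_flip [z zp flip] x y xy.
pose g b := f (upd z p b) i.
have fg (u : config V) : f u i = g (u p).
  by apply: eq_f_only_arc only_p _ _ _; rewrite ffunE eqxx.
have : g false != g true by move: flip; rewrite !fg ffunE eqxx zp.
by rewrite !fg; move: xy; case: (x p); case: (y p) => // _ gne; rewrite // eq_sym.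
Qed.

Lemma fword_disagree f (C : {set V}) (p : V -> V) :
  {in C, forall i, p i \in C} ->
  {in C, forall i x y, x (p i) != y (p i) -> f x i != f y i} ->
  forall w x y, {in C, forall v, x v != y v} ->
  {in C, forall v, fword f w x v != fword f w y v}.
Proof.
move=> pC fC; elim=> [|k w IH] x y xy //=.
apply: IH => v vC; rewrite !ffunE; case: (eqVneq v k) => [<- | _]; last exact: xy.
by apply: fC => //; apply: xy; apply: pC.
Qed.

End Interaction.

Section InitialCycle.

Variables (V : finType) (G : sdigraph V) (C : {set V}).
Hypothesis CG : initial_cycle G C.

Lemma initial_cycle_neq0 : C != set0.
Proof.
case: CG => _ _ [[|v c] [_ [_ _ -> _]]] //.
by apply/set0Pn; exists v; rewrite inE mem_head.
Qed.

Lemma initial_cycle_only_arc :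
  exists p : V -> V, {in C, forall i,
    [/\ p i \in C, forall j s, (j, i, s) \in G -> j = p i
      & exists s, (p i, i, s) \in G]}.
Proof.
case: CG => _ init [c [sg [_ c_uniq C_c arcs]]].
have mem_C v : (v \in C) = (v \in c) by rewrite C_c inE.
exists (prev c) => i iC; have ic : i \in c by rewrite -mem_C.
have pC : prev c i \in C by rewrite mem_C mem_prev.
split=> //.
  move=> j s jis; have jC := init _ _ _ jis iC.
  by move: jis; rewrite arcs // => /andP [/eqP -> _]; rewrite prev_next.
by exists (sg (prev c i)); rewrite arcs // next_prev // !eqxx.
Qed.

End InitialCycle.

Theorem lemma2 (V : finType) (G : sdigraph V) :
  (exists C : {set V}, initial_cycle G C) ->
  forall f : BN V, BN_on G f -> ~ synchronizing f.
Proof.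
move=> [C +] f fG; rewrite -fG => CG [w sync_w].
have [p p_only] := initial_cycle_only_arc CG.
have [v vC] := set0Pn _ (initial_cycle_neq0 CG).
have pC : {in C, forall i, p i \in C} by move=> i /p_only [].
have fC : {in C, forall i (x y : config V), x (p i) != y (p i) -> f x i != f y i}.
  by move=> i /p_only [_ only_p [s arc]]; apply: neq_f_only_arc only_p arc.
have all_neq : {in C, forall v, [ffun=> false] v != [ffun=> true] v :> bool}.
  by move=> u _; rewrite !ffunE.
have := fword_disagree pC fC w all_neq vC.
by rewrite (sync_w _ [ffun=> true]) eqxx.
Qed.
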